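(* Let $s\colon\mathbb{R}\to[0,\infty)$ be convex and lower semi-continuous with $s(0)=0$, and let $\kappa,\alpha>0$. Suppose there exist $b,c>0$ such that for all $x\in\mathbb{R}$: $$|x|\le \min\big(\operatorname{prox}_{\alpha s}^{-1}(c\kappa)\big)\ \Longrightarrow\ |\operatorname{prox}_{\alpha s}(x)|\le \frac{\kappa^2}{\kappa^2+\alpha b}|x|.$$ Then for all $y\in\mathbb{R}$: if $|y|\le c\kappa$ then $s(y)\ge \frac b2\,|y/\kappa|^2$; and if $|y|>c\kappa$ then $s(y)\ge bc\,|y/\kappa|-\frac{bc^2}{2}$.
   Context: For a proper convex lower semi-continuous $f\colon\mathbb{R}\to\mathbb{R}\cup\{\infty\}$, $\operatorname{prox}_f(x)=\operatorname{argmin}_{y\in\mathbb{R}}\tfrac12|x-y|^2+f(y)$; one has $\operatorname{prox}_f=(\mathrm{id}+\partial f)^{-1}$. $\operatorname{prox}_{\alpha s}^{-1}(c\kappa)=\{x:\operatorname{prox}_{\alpha s}(x)=c\kappa\}$ is a closed interval, and $\min$ of it denotes its smallest element (infimum). *)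

From Stdlib Require Export Reals.
Open Scope R_scope.

Definition convex_fun (f : R -> R) : Prop :=
  forall x y t, 0 <= t <= 1 ->
    f (t * x + (1 - t) * y) <= t * f x + (1 - t) * f y.

Definition lsc (f : R -> R) : Prop :=
  forall x eps, 0 < eps -> exists delta, 0 < delta /\
    forall y, Rabs (y - x) < delta -> f x - eps < f y.

(* p = prox_f(x), i.e. p is a minimiser of y |-> 1/2 |x - y|^2 + f y.
   (For convex f the minimiser is unique, so this relation is a function.) *)
Definition is_prox (f : R -> R) (x p : R) : Prop :=
  forall y, / 2 * (x - p) ^ 2 + f p <= / 2 * (x - y) ^ 2 + f y.

Definition is_min_prox_preimage (f : R -> R) (v m : R) : Prop :=
  is_prox f m v /\ (forall x, is_prox f x v -> m <= x).

From Stdlib Require Import Reals Lra.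
Open Scope R_scope.

(** Write [f = alpha s], [C = c kappa] and [L = alpha b / kappa^2], so that the
    contraction factor of the hypothesis is [1 / (1 + L)].  On the real line
    [prox_f = (id + ∂f)^-1]: [v = prox_f x] iff [x - v] is a subgradient of
    [f] at [v].  Hence the least preimage of [C] is [M = C + dC], with [dC] the
    least subgradient (left derivative) at [C], which exists by completeness.

    Applying the contraction at [x = p + d], for [d] a subgradient at [p], gives
    the slope bounds [d >= L p] for [0 < p <= C] (there [0 <= x <= M] by
    monotonicity of subgradients) and [d <= L p] for [- C <= p < 0].
    Integrating these slope bounds (a telescoping Riemann-sum argument) yields
    [f y >= L y^2 / 2] for [|y| <= C]; beyond [C] the supporting lines at
    [± C] continue the bound linearly.  Dividing by [alpha] gives the theorem. *)

Lemma le_of_forall_sub_div_le (x y B : R) :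
  (forall n, (0 < n)%nat -> x - B / INR n <= y) -> x <= y.
Proof.
  intros h.
  destruct (Rle_or_lt B 0) as [hB|hB].
  - specialize (h 1%nat ltac:(auto)). simpl in h. lra.
  - destruct (Rle_or_lt x y) as [hxy|hxy]; [exact hxy|exfalso].
    destruct (archimed_cor1 ((x - y) / B)) as [n [hn hn0]].
    { apply Rdiv_lt_0_compat; lra. }
    specialize (h n hn0).
    assert (hnpos : 0 < INR n) by (apply lt_0_INR; exact hn0).
    assert (hsmall : B / INR n < x - y).
    { apply (Rmult_lt_reg_r (/ B)); [apply Rinv_0_lt_compat; lra|].
      replace (B / INR n * / B) with (/ INR n) by (field; lra).
      exact hn. }
    lra.
Qed.

Lemma defect_telescope (phi : R -> R) (K a h : R) (n : nat) :
  0 <= h ->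
  (forall p q, a <= p -> p <= q -> q <= a + INR n * h -> phi p - K * (q - p) ^ 2 <= phi q) ->
  phi a - INR n * K * h ^ 2 <= phi (a + INR n * h).
Proof.
  intros hh. induction n as [|n IH]; intros hstep.
  - simpl. replace (a + 0 * h) with a by ring. lra.
  - rewrite S_INR in *.
    assert (hprev : phi a - INR n * K * h ^ 2 <= phi (a + INR n * h)).
    { apply IH. intros p q hp hpq hq. apply hstep; nra. }
    assert (hlast : phi (a + INR n * h) - K * h ^ 2 <= phi (a + (INR n + 1) * h)).
    { replace h with ((a + (INR n + 1) * h) - (a + INR n * h)) at 2 by ring.
      pose proof (pos_INR n). apply hstep; nra. }
    lra.
Qed.

(** A function whose decrease over any subinterval [[p, q]] of [[a, b]] is at
    most quadratic in [q - p] cannot decrease from [a] to [b]: refining the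
    partition makes the accumulated loss [K (b - a)^2 / n] vanish. *)
Lemma quadratic_defect_monotone (phi : R -> R) (K a b : R) :
  a <= b ->
  (forall p q, a <= p -> p <= q -> q <= b -> phi p - K * (q - p) ^ 2 <= phi q) ->
  phi a <= phi b.
Proof.
  intros hab hstep.
  apply (le_of_forall_sub_div_le _ _ (K * (b - a) ^ 2)). intros n hn.
  assert (hnpos : 0 < INR n) by (apply lt_0_INR; exact hn).
  set (h := (b - a) / INR n).
  assert (hb : a + INR n * h = b) by (unfold h; field; lra).
  assert (hloss : INR n * K * h ^ 2 = K * (b - a) ^ 2 / INR n) by (unfold h; field; lra).
  rewrite <- hloss, <- hb.
  apply defect_telescope.
  - unfold h. apply Rmult_le_pos; [lra | left; apply Rinv_0_lt_compat; exact hnpos].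
  - rewrite hb. exact hstep.
Qed.

Definition subgradient (f : R -> R) (v d : R) : Prop :=
  forall y, f v + d * (y - v) <= f y.

Lemma subgradient_mono (f : R -> R) (p q d e : R) :
  p < q -> subgradient f p d -> subgradient f q e -> d <= e.
Proof.
  intros hpq hd he. specialize (hd q). specialize (he p).
  apply (Rmult_le_reg_r (q - p)); lra.
Qed.

Lemma subgradient_at_minimiser (f : R -> R) (v : R) :
  (forall y, f v <= f y) -> subgradient f v 0.
Proof. intros hmin y. specialize (hmin y). lra. Qed.

Lemma subgradient_sign (f : R -> R) (p d : R) :
  (forall y, f 0 <= f y) -> subgradient f p d -> 0 <= d * p.
Proof. intros hmin hd. specialize (hd 0). specialize (hmin p). lra. Qed.

Lemma subgradient_reflect (f : R -> R) (p d : R) :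
  subgradient f (- p) d -> subgradient (fun t => f (- t)) p (- d).
Proof. intros hd y. specialize (hd (- y)). simpl. lra. Qed.

Lemma convex_three_chord (f : R -> R) (y v z : R) :
  convex_fun f -> y < v -> v < z ->
  (f v - f y) * (z - v) <= (f z - f v) * (v - y).
Proof.
  intros hf hyv hvz.
  set (t := (z - v) / (z - y)).
  assert (ht : 0 <= t <= 1).
  { unfold t. split.
    - apply Rmult_le_pos; [lra | left; apply Rinv_0_lt_compat; lra].
    - apply (Rmult_le_reg_r (z - y)); [lra|]. field_simplify; lra. }
  pose proof (hf y z t ht) as hconv.
  replace (t * y + (1 - t) * z) with v in hconv by (unfold t; field; lra).
  apply (Rmult_le_compat_l (z - y)) in hconv; [|lra].
  replace ((z - y) * (t * f y + (1 - t) * f z))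
    with ((z - v) * f y + (v - y) * f z) in hconv by (unfold t; field; lra).
  nra.
Qed.

(** A convex function on the line has, at every point, a least subgradient
    (its left derivative), obtained as the supremum of the left slopes
    [{r | r (v - y) <= f v - f y for some y < v}]. *)
Lemma convex_least_subgradient (f : R -> R) (v : R) :
  convex_fun f ->
  exists d, subgradient f v d /\ forall e, subgradient f v e -> d <= e.
Proof.
  intros hf.
  set (E := fun r => exists y, y < v /\ r * (v - y) <= f v - f y).
  assert (hright : forall r z, E r -> v < z -> r * (z - v) <= f z - f v).
  { intros r z [y [hy hr]] hz.
    pose proof (convex_three_chord f y v z hf hy hz).
    apply (Rmult_le_reg_r (v - y)); [lra|]. nra. }
  assert (hbound : bound E).
  { exists (f (v + 1) - f v). intros r hr.
    pose proof (hright r (v + 1) hr ltac:(lra)). lra. }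
  assert (hne : exists r, E r).
  { exists (f v - f (v - 1)). exists (v - 1). split; [lra|]. lra. }
  destruct (completeness E hbound hne) as [d [hub hlub]].
  exists d. split.
  - intros y. destruct (Rtotal_order y v) as [hy|[hy|hy]].
    + assert (hEy : E ((f v - f y) / (v - y))).
      { exists y. split; [exact hy|]. right. field. lra. }
      pose proof (hub _ hEy) as hq.
      apply (Rmult_le_compat_r (v - y)) in hq; [|lra].
      replace ((f v - f y) / (v - y) * (v - y)) with (f v - f y) in hq by (field; lra).
      lra.
    + subst y. lra.
    + assert (hd : d <= (f y - f v) / (y - v)).
      { apply hlub. intros r hr. apply (Rmult_le_reg_r (y - v)); [lra|].
        replace ((f y - f v) / (y - v) * (y - v)) with (f y - f v) by (field; lra).
        exact (hright r y hr hy). }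
      apply (Rmult_le_compat_r (y - v)) in hd; [|lra].
      replace ((f y - f v) / (y - v) * (y - v)) with (f y - f v) in hd by (field; lra).
      lra.
  - intros e he. apply hlub. intros r [y [hy hr]].
    specialize (he y). apply (Rmult_le_reg_r (v - y)); [lra|]. lra.
Qed.

Lemma prox_of_subgradient (f : R -> R) (v d : R) :
  subgradient f v d -> is_prox f (v + d) v.
Proof.
  intros hd y. specialize (hd y). pose proof (pow2_ge_0 (y - v)).
  replace (/ 2 * (v + d - y) ^ 2)
    with (/ 2 * (v + d - v) ^ 2 - d * (y - v) + / 2 * (y - v) ^ 2) by field.
  lra.
Qed.

(** Comparing [v]
    with [v + t (y - v)] gives the subgradient inequality up to an error
    [t (y - v)^2 / 2], which vanishes as [t = 1/n] tends to [0]. *)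
Lemma subgradient_of_prox (f : R -> R) (x v : R) :
  convex_fun f -> is_prox f x v -> subgradient f v (x - v).
Proof.
  intros hf hprox y.
  assert (hstep : forall t, 0 < t <= 1 ->
            f v + (x - v) * (y - v) - t * (y - v) ^ 2 / 2 <= f y).
  { intros t ht.
    pose proof (hprox (t * y + (1 - t) * v)) as hp.
    pose proof (hf y v t ltac:(lra)) as hc.
    assert (hmul : t * (f v + (x - v) * (y - v) - t * (y - v) ^ 2 / 2) <= t * f y)
      by nra.
    apply (Rmult_le_reg_l t); lra. }
  apply (le_of_forall_sub_div_le _ _ ((y - v) ^ 2 / 2)). intros n hn.
  assert (hnpos : 1 <= INR n) by (apply (le_INR 1); exact hn).
  replace ((y - v) ^ 2 / 2 / INR n) with (/ INR n * (y - v) ^ 2 / 2) by (field; lra).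
  apply hstep. split.
  - apply Rinv_0_lt_compat; lra.
  - rewrite <- Rinv_1. apply Rinv_le_contravar; lra.
Qed.

Lemma min_prox_preimage_of_least_subgradient (f : R -> R) (v d : R) :
  convex_fun f -> subgradient f v d ->
  (forall e, subgradient f v e -> d <= e) ->
  is_min_prox_preimage f v (v + d).
Proof.
  intros hf hd hleast. split.
  - exact (prox_of_subgradient f v d hd).
  - intros x hx. pose proof (hleast _ (subgradient_of_prox f x v hf hx)). lra.
Qed.

(** Integrating slopes: if on [[0, Y)] the function [g] has subgradients of
    slope at least [L p], then [g] grows at least like [L Y^2 / 2].  Indeed
    [g t - L t^2 / 2] loses at most [L (q - p)^2 / 2] from [p] to [q]. *)
Lemma quadratic_growth (g : R -> R) (L Y : R) :
  0 <= Y ->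
  (forall p, 0 <= p < Y -> exists e, L * p <= e /\ subgradient g p e) ->
  g 0 + L / 2 * Y ^ 2 <= g Y.
Proof.
  intros hY hslope.
  assert (hmono : g 0 - L / 2 * 0 ^ 2 <= g Y - L / 2 * Y ^ 2).
  { apply (quadratic_defect_monotone (fun t => g t - L / 2 * t ^ 2) (L / 2));
      [exact hY|].
    intros p q hp hpq hq. cbv beta.
    destruct (Req_dec p q) as [->|hne]; [lra|].
    destruct (hslope p ltac:(lra)) as [e [he hsub]].
    specialize (hsub q).
    assert (L * p * (q - p) <= e * (q - p)) by (apply Rmult_le_compat_r; lra).
    nra. }
  lra.
Qed.

(** Huber-type growth on the half-line: quadratic growth up to [C], continued
    by the supporting line at [C] (of slope at least [L C]) beyond [C]. *)
Lemma huber_growth_halfline (g : R -> R) (L C d : R) :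
  (forall p, 0 <= p < C -> exists e, L * p <= e /\ subgradient g p e) ->
  0 <= C -> subgradient g C d -> L * C <= d ->
  forall y, 0 <= y ->
    (y <= C -> g 0 + L / 2 * y ^ 2 <= g y) /\
    (C < y -> g 0 + (L * C * y - L * C ^ 2 / 2) <= g y).
Proof.
  intros hslope hC hd hdL y hy. split.
  - intros hyC. apply quadratic_growth; [exact hy|].
    intros p hp. apply hslope. lra.
  - intros hyC.
    pose proof (quadratic_growth g L C hC hslope) as hquad.
    specialize (hd y).
    assert (L * C * (y - C) <= d * (y - C)) by (apply Rmult_le_compat_r; lra).
    nra.
Qed.

(** From the contraction of the prox on [[- M, M]], where [M = C + dC] is the
    least preimage of [C], to the Huber lower bound on [f]. *)
Section ContractionGivesHuberGrowth.

Variables (f : R -> R) (L C dC : R).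
Hypothesis f_convex : convex_fun f.
Hypothesis f_min_at_0 : forall y, f 0 <= f y.
Hypothesis L_nonneg : 0 <= L.
Hypothesis C_pos : 0 < C.
Hypothesis dC_subgradient : subgradient f C dC.
Hypothesis prox_contracts : forall x p, is_prox f x p -> Rabs x <= C + dC ->
  (1 + L) * Rabs p <= Rabs x.

(** On [(0, C]], a subgradient not exceeding [dC] has slope at least [L p]:
    apply the contraction at [x = p + d], whose prox is [p]. *)
Lemma slope_lower_bound_pos (p d : R) :
  0 < p <= C -> subgradient f p d -> d <= dC -> L * p <= d.
Proof.
  intros hp hd hdC.
  pose proof (subgradient_sign f p d f_min_at_0 hd) as hsign.
  assert (hd0 : 0 <= d) by nra.
  pose proof (prox_contracts (p + d) p (prox_of_subgradient f p d hd)) as hc.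
  rewrite (Rabs_pos_eq p), (Rabs_pos_eq (p + d)) in hc by lra.
  specialize (hc ltac:(lra)). lra.
Qed.

Lemma slope_at_C : L * C <= dC.
Proof. apply slope_lower_bound_pos; [lra | exact dC_subgradient | lra]. Qed.

(** On [[- C, 0)], every subgradient has slope at most [L p]: either
    [x = p + d] lies in [[- M, M]] and the contraction applies, or it lies
    below [- M] and the slope is even more negative. *)
Lemma slope_upper_bound_neg (p d : R) :
  - C <= p < 0 -> subgradient f p d -> d <= L * p.
Proof.
  intros hp hd.
  pose proof (subgradient_sign f p d f_min_at_0 hd) as hsign.
  assert (hd0 : d <= 0) by nra.
  pose proof slope_at_C as hLC.
  destruct (Rle_or_lt (- (C + dC)) (p + d)) as [hx|hx].
  - pose proof (prox_contracts (p + d) p (prox_of_subgradient f p d hd)) as hc.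
    rewrite (Rabs_left p), (Rabs_left1 (p + d)) in hc by lra.
    specialize (hc ltac:(lra)). lra.
  - assert (0 <= L * (p + C)) by (apply Rmult_le_pos; lra). nra.
Qed.

Lemma slopes_pos (p : R) :
  0 <= p < C -> exists e, L * p <= e /\ subgradient f p e.
Proof.
  intros hp. destruct (Req_dec p 0) as [->|hp0].
  - exists 0. split; [lra|]. exact (subgradient_at_minimiser f 0 f_min_at_0).
  - destruct (convex_least_subgradient f p f_convex) as [e [he _]].
    exists e. split; [|exact he].
    apply slope_lower_bound_pos; [lra | exact he |].
    apply (subgradient_mono f p C); [lra | exact he | exact dC_subgradient].
Qed.

Lemma slopes_neg (p : R) :
  - C <= p <= 0 -> exists e, e <= L * p /\ subgradient f p e.
Proof.
  intros hp. destruct (Req_dec p 0) as [->|hp0].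
  - exists 0. split; [lra|]. exact (subgradient_at_minimiser f 0 f_min_at_0).
  - destruct (convex_least_subgradient f p f_convex) as [e [he _]].
    exists e. split; [|exact he].
    apply slope_upper_bound_neg; [lra | exact he].
Qed.

(** The Huber lower bound, on both sides of [0]; the negative side is the
    half-line bound for the reflected function [t |-> f (- t)]. *)
Theorem huber_growth_of_contraction (y : R) :
  (Rabs y <= C -> f 0 + L / 2 * y ^ 2 <= f y) /\
  (C < Rabs y -> f 0 + (L * C * Rabs y - L * C ^ 2 / 2) <= f y).
Proof.
  destruct (Rle_or_lt 0 y) as [hy|hy].
  - rewrite (Rabs_pos_eq y hy).
    exact (huber_growth_halfline f L C dC slopes_pos ltac:(lra)
             dC_subgradient slope_at_C y hy).
  - rewrite (Rabs_left y hy).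
    assert (hrefl : forall p, 0 <= p < C ->
              exists e, L * p <= e /\ subgradient (fun t => f (- t)) p e).
    { intros p hp. destruct (slopes_neg (- p) ltac:(lra)) as [e [he hsub]].
      exists (- e). split; [lra|]. exact (subgradient_reflect f p e hsub). }
    destruct (slopes_neg (- C) ltac:(lra)) as [dm [hdm hsubm]].
    pose proof (huber_growth_halfline (fun t => f (- t)) L C (- dm) hrefl
                  ltac:(lra) (subgradient_reflect f C dm hsubm) ltac:(lra)
                  (- y) ltac:(lra)) as hg.
    cbv beta in hg. rewrite Ropp_0, Ropp_involutive in hg.
    replace ((- y) ^ 2) with (y ^ 2) in hg by ring. exact hg.
Qed.

End ContractionGivesHuberGrowth.

Theorem lemma2p3 (s : R -> R) (kappa alpha b c : R)
  (hs_nonneg : forall x, 0 <= s x)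
  (hs_convex : convex_fun s)
  (hs_lsc : lsc s)
  (hs0 : s 0 = 0)
  (hkappa : 0 < kappa) (halpha : 0 < alpha)
  (hb : 0 < b) (hc : 0 < c)
  (hprox : forall m, is_min_prox_preimage (fun y => alpha * s y) (c * kappa) m ->
     forall x p, is_prox (fun y => alpha * s y) x p ->
       Rabs x <= m ->
       Rabs p <= kappa ^ 2 / (kappa ^ 2 + alpha * b) * Rabs x) :
  forall y,
    (Rabs y <= c * kappa -> s y >= b / 2 * (Rabs (y / kappa)) ^ 2) /\
    (Rabs y > c * kappa -> s y >= b * c * Rabs (y / kappa) - b * c ^ 2 / 2).
Proof.
  set (f := fun y => alpha * s y) in hprox.
  set (L := alpha * b / kappa ^ 2).
  assert (hk2 : 0 < kappa ^ 2) by nra.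
  assert (hL : 0 <= L) by (unfold L; apply Rmult_le_pos; [nra | left; apply Rinv_0_lt_compat; lra]).
  assert (hf_convex : convex_fun f).
  { intros x y t ht. unfold f. pose proof (hs_convex x y t ht). nra. }
  assert (hf0 : f 0 = 0) by (unfold f; rewrite hs0; ring).
  assert (hf_min : forall y, f 0 <= f y).
  { intros y. rewrite hf0. unfold f. pose proof (hs_nonneg y). nra. }
  destruct (convex_least_subgradient f (c * kappa) hf_convex) as [dC [hdC hleast]].
  pose proof (hprox _ (min_prox_preimage_of_least_subgradient f _ dC hf_convex hdC hleast))
    as hcontract.
  assert (hcontract_L : forall x p, is_prox f x p -> Rabs x <= c * kappa + dC ->
            (1 + L) * Rabs p <= Rabs x).
  { intros x p hxp hx. pose proof (hcontract x p hxp hx) as hp.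
    apply (Rmult_le_compat_l (1 + L)) in hp; [|lra].
    replace ((1 + L) * (kappa ^ 2 / (kappa ^ 2 + alpha * b) * Rabs x)) with (Rabs x)
      in hp by (unfold L; field; nra).
    exact hp. }
  intros y.
  destruct (huber_growth_of_contraction f L (c * kappa) dC hf_convex hf_min hL
              ltac:(nra) hdC hcontract_L y) as [hquad hlin].
  rewrite hf0 in hquad, hlin. unfold f in hquad, hlin.
  assert (habs : Rabs (y / kappa) = Rabs y / kappa).
  { unfold Rdiv. rewrite Rabs_mult, Rabs_inv, (Rabs_pos_eq kappa); lra. }
  rewrite habs. split; intros hy; apply Rle_ge, (Rmult_le_reg_l alpha); try lra.
  - rewrite <- pow2_abs in hquad.
    replace (alpha * (b / 2 * (Rabs y / kappa) ^ 2)) with (L / 2 * Rabs y ^ 2)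
      by (unfold L; field; lra).
    lra.
  - replace (alpha * (b * c * (Rabs y / kappa) - b * c ^ 2 / 2))
      with (L * (c * kappa) * Rabs y - L * (c * kappa) ^ 2 / 2)
      by (unfold L; field; lra).
    specialize (hlin ltac:(lra)). lra.
Qed.
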